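(* Let $p$ be a prime, $m\ge 0$ an integer, $T\ge 0$ and $\lambda>0$ real, and suppose $1\le m+\lceil \log_p\lambda\rceil$. Then $$\Pr\Big(\sup_{0\le s\le T}\frac{\big|p^m S^{(p)}_{\lfloor D_p p^{mb}s\rfloor}\big|_p}{p}<\lambda\Big)=\Big(1-\frac{(p[\lambda]_p)^{-b}}{p^{mb}}\Big)^{\lfloor D_p p^{mb}T\rfloor}.$$
   Context: Fix a real exponent $b>0$. For a prime $p$, $\mathbb{Q}_p$ denotes the $p$-adic numbers with absolute value $|\cdot|_p$ and $\mathbb{Z}_p$ its closed unit ball. Let $G_p\subset\mathbb{Q}_p$ be the set of $p$-adic numbers of the form $\sum_{k<0}a_kp^k$ with $a_k\in\{0,\dots,p-1\}$, only finitely many nonzero; $G_p$ is a set of representatives of $\mathbb{Q}_p/\mathbb{Z}_p$ and is given the group structure of $\mathbb{Q}_p/\mathbb{Z}_p$. Let $X^{(p)}$ be a $G_p$-valued random variable with $\Pr(|X^{(p)}|_p=p^k)=(p^b-1)p^{-kb}$ for every integer $k\ge1$, and, conditionally on $|X^{(p)}|_p=p^k$, uniformly distributed on the finite set $\{x\in G_p:|x|_p=p^k\}$. Let $X^{(p)}_1,X^{(p)}_2,\dots$ be i.i.d. copies of $X^{(p)}$ and $S^{(p)}_n=X^{(p)}_1+\dots+X^{(p)}_n$ (sum in the group $G_p$), $S^{(p)}_0=0$. Given a nonnegative real $\sigma_p$ (the diffusion coefficient at $p$), put $D_p=\frac{p^b(p-1)}{p^{b+1}-1}\sigma_p$. For $\lambda>0$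 write $[\lambda]_p=p^{\lceil\log_p\lambda\rceil-1}$. *)

From HB Require Import structures.
From mathcomp Require Import all_boot all_order all_algebra.
From mathcomp Require Import all_classical all_reals all_analysis.

Set Implicit Arguments.
Unset Strict Implicit.
Unset Printing Implicit Defensive.

Import Order.TTheory GRing.Theory Num.Theory.
Local Open Scope ring_scope.
Local Open Scope classical_set_scope.

Definition padic_abs (R : realType) (p : nat) (q : rat) : R :=
  if q == 0 then 0
  else (p ^ logn p `|denq q|)%:R / (p ^ logn p `|numq q|)%:R.

(* G_p : the p-adic numbers sum_{k<0} a_k p^k (finitely many nonzero digits),
   i.e. the rationals in [0,1) whose reduced denominator is a power of p. *)
Definition inGp (p : nat) (q : rat) : bool :=
  [&& 0 <= q, q < 1 & (p ^ logn p `|denq q| == `|denq q|)%N].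

Definition Gp (p : nat) := {q : rat | inGp p q}.

Definition fracq (q : rat) : rat := q - (Num.floor q)%:~R.

(* group law of G_p transported from Q_p/Z_p: addition modulo Z_p,
   which on these representatives is addition modulo 1 *)
Definition Gpadd (x y : rat) : rat := fracq (x + y).

Definition walk (T : Type) (p : nat) (X : nat -> T -> Gp p) (n : nat) (w : T)
  : rat := \big[Gpadd/0]_(i < n) val (X i w).

Definition Dcoef (R : realType) (p : nat) (b sigma : R) : R :=
  (p%:R `^ b) * (p%:R - 1) / (p%:R `^ (b + 1) - 1) * sigma.

Definition pfloor (R : realType) (p : nat) (lam : R) : R :=
  (p%:R : R) ^ (Num.ceil (ln lam / ln p%:R) - 1).

(* the step distribution of X^(p): P(|X|_p = p^k) = (p^b-1) p^(-kb) for k >= 1,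
   and conditionally on |X|_p = p^k, X is uniform on {x : |x|_p = p^k}
   (equivalently, since that event has positive probability, all points of
   that finite sphere have the same probability). *)
Definition step_law (d : measure_display) (T : measurableType d) (R : realType)
  (P : probability T R) (p : nat) (b : R) (Y : T -> Gp p) : Prop :=
  (forall k : nat, (1 <= k)%N ->
     P (Y @^-1` [set x | padic_abs R p (val x) = (p%:R ^+ k)]) =
     ((p%:R `^ b - 1) * p%:R `^ (- (k%:R * b)))%:E) /\
  (forall (k : nat) (x y : Gp p), (1 <= k)%N ->
     padic_abs R p (val x) = p%:R ^+ k -> padic_abs R p (val y) = p%:R ^+ k ->
     P (Y @^-1` [set x]) = P (Y @^-1` [set y])).

Definition iid_steps (d : measure_display) (T : measurableType d) (R : realType)
  (P : probability T R) (p : nat) (b : R) (X : nat -> T -> Gp p) : Prop :=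
  (forall (i : nat) (A : set (Gp p)), measurable (X i @^-1` A)) /\
  (forall (n : nat) (A : nat -> set (Gp p)),
     P (\bigcap_(i in `I_n) (X i @^-1` A i)) =
     (\prod_(i < n) P (X i @^-1` A i))%E) /\
  (forall i, step_law P b (X i)).

From Pilot Require Import Defs.
From HB Require Import structures.
From mathcomp Require Import all_boot all_order all_algebra.
From mathcomp Require Import all_classical all_reals all_analysis.
From mathcomp Require Import ring lra zify.
Import Order.TTheory GRing.Theory Num.Theory.
Local Open Scope ring_scope.
Local Open Scope classical_set_scope.
Set Implicit Arguments.
Unset Strict Implicit.

(* Put J := m + ceil(log_p lam).  A point x of G_p with denominator p^e has
   |x|_p = p^e, so |p^m x|_p / p < lam exactly when e <= J, i.e. when x lies
   in the subgroup p^-J Z / Z.  Since that is a subgroup, the walk stays in it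
   up to time N := floor(D_p p^(mb) T) iff each of its first N steps does.  The
   step law gives P(|X|_p <= p^J) = 1 - p^(-Jb): the spheres telescope, and
   P(X = 0) = 0 because it is at most p^(-jb) for every j.  Independence then
   turns the event into the N-th power. *)

(* [pball p j x] : x lies in p^-j Z, i.e. |x|_p <= p^j. *)
Definition pball (p j : nat) (x : rat) : Prop :=
  exists z : int, x = z%:~R / (p ^ j)%:R.

Section PBall.
Variable p : nat.
Hypothesis p_prime : prime p.

Let pexpn_gt0 j : (0 < p ^ j)%N.
Proof. by rewrite expn_gt0 prime_gt0. Qed.

Let pexpn_eq0 j : (p ^ j == 0)%N = false.
Proof. by rewrite eqn0Ngt pexpn_gt0. Qed.

Let pexpn_neq0 (F : numFieldType) j : (p ^ j)%:R != 0 :> F.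
Proof. by rewrite pnatr_eq0 pexpn_eq0. Qed.

Lemma pballE j x : pball p j x <-> (denq x %| (p ^ j)%N%:Z)%Z.
Proof.
split.
- case=> z xE.
  have e : numq x * (p ^ j)%N%:Z = z * denq x.
    apply: (@intr_inj rat); rewrite !rmorphM /= numqE xE /=.
    by rewrite pmulrn mulrAC divfK ?pexpn_neq0.
  have : (denq x %| numq x * (p ^ j)%N%:Z)%Z by rewrite e dvdz_mull.
  by rewrite Gauss_dvdzr // coprimezE coprime_sym coprime_num_den.
- case/dvdzP => k hk; exists (numq x * k).
  have k_neq0 : k%:~R != 0 :> rat.
    apply: contraTneq isT => /eqP; rewrite intr_eq0 => /eqP k0.
    by have := pexpn_gt0 j; rewrite -ltz_nat hk k0 mul0r ltxx.
  rewrite -[x in LHS]divq_num_den -[(p ^ j)%:R]/((p ^ j)%N%:Z%:~R : rat).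
  by rewrite hk !rmorphM /= invfM mulrA mulfK.
Qed.

Lemma pball_int j (z : int) : pball p j z%:~R.
Proof. by exists (z * (p ^ j)%N%:Z); rewrite rmorphM /= mulfK ?pexpn_neq0. Qed.

Lemma pball0 j : pball p j 0.
Proof. exact: (pball_int j 0). Qed.

Lemma pballD j x y : pball p j x -> pball p j y -> pball p j (x + y).
Proof. by case=> a -> [c ->]; exists (a + c); rewrite rmorphD mulrDl. Qed.

Lemma pballN j x : pball p j x -> pball p j (- x).
Proof. by case=> a ->; exists (- a); rewrite rmorphN mulNr. Qed.

Lemma pballB j x y : pball p j x -> pball p j y -> pball p j (x - y).
Proof. by move=> hx /pballN; apply: pballD. Qed.

Lemma pball_le i j x : (i <= j)%N -> pball p i x -> pball p j x.
Proof.
move=> ij /pballE hx; apply/pballE; apply: dvdz_trans hx _.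
by rewrite unfold_in /= dvdn_Pexp2l // prime_gt1.
Qed.

Lemma pball_Gp x : inGp p x -> pball p (logn p `|denq x|) x.
Proof. by case/and3P=> _ _ /eqP hden; apply/pballE; rewrite /dvdz /= hden. Qed.

Lemma pball_sum_ord N J (F : nat -> rat) :
  (forall n, (n <= N)%N -> pball p J (\sum_(i < n) F i)) <->
  (forall i, (i < N)%N -> pball p J (F i)).
Proof.
split=> h.
  move=> i iN; have := pballB (h i.+1 iN) (h i (ltnW iN)).
  by rewrite big_ord_recr /= addrAC subrr add0r.
elim=> [|n IH] nN; first by rewrite big_ord0; apply: pball0.
by rewrite big_ord_recr /=; apply: pballD; [apply: IH; apply: ltnW | apply: h].
Qed.

Lemma pball_sum_ex n (F : nat -> rat) : (forall i, exists e, pball p e (F i)) ->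
  exists E, pball p E (\sum_(i < n) F i).
Proof.
move=> hF; elim: n => [|n [E hE]].
  by exists 0%N; rewrite big_ord0; apply: pball0.
have [e he] := hF n; exists (E + e)%N; rewrite big_ord_recr /=.
by apply: pballD; [apply: pball_le hE | apply: pball_le he];
  rewrite ?leq_addr ?leq_addl.
Qed.

Lemma pball_pexp_den x e j :
  denq x = (p ^ e)%N%:Z -> pball p j x <-> (e <= j)%N.
Proof.
by move=> hden; rewrite pballE unfold_in /= hden /= dvdn_Pexp2l // prime_gt1.
Qed.

Lemma pball_den_pexp x E : pball p E x -> exists e, denq x = (p ^ e)%N%:Z.
Proof.
move/pballE; rewrite unfold_in /= => /(dvdn_pfactor _ _ p_prime)[e _ he].
by exists e; rewrite -absz_denq he.
Qed.

Lemma padic_abs_unit_pexpz (R : realType) (a k : int) :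
  a != 0 -> coprime p `|a| -> padic_abs R p (a%:~R * p%:R ^ k) = p%:R ^ (- k).
Proof.
move=> a_neq0 cop; rewrite /padic_abs.
case: k => n.
- have -> : a%:~R * p%:R ^ n%:Z = (a * (p ^ n)%N%:Z)%:~R :> rat.
    by rewrite rmorphM /= -pmulrn natrX.
  rewrite (intr_eq0 rat) mulf_eq0 (negPf a_neq0) eqz_nat pexpn_eq0.
  rewrite numq_int denq_int abszM /= logn1 expn0 lognM ?absz_gt0 //.
  by rewrite logn_coprime // pfactorK // add0n natrX div1r -invr_expz.
- have -> : a%:~R * p%:R ^ Negz n = a%:~R / ((p ^ n.+1)%N%:Z)%:~R :> rat.
    by rewrite NegzE -invr_expz -pmulrn natrX.
  have cop' : coprime `|a| `|(p ^ n.+1)%N%:Z|.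
    by rewrite /= coprimeXr // coprime_sym.
  rewrite mulf_eq0 invr_eq0 !(intr_eq0 rat) (negPf a_neq0) eqz_nat pexpn_eq0.
  rewrite coprimeq_den // coprimeq_num // eqz_nat pexpn_eq0 /=.
  rewrite gtr0_sg ?ltz_nat ?expn_gt0 ?prime_gt0 // mul1r.
  by rewrite pfactorK // logn_coprime // expn0 divr1 NegzE opprK natrX.
Qed.

Lemma padic_abs_pexp_mul (R : realType) x m e :
  (0 < e)%N -> denq x = (p ^ e)%N%:Z ->
  padic_abs R p ((p ^ m)%:R * x) = p%:R ^ (e%:Z - m%:Z).
Proof.
move=> e_gt0 hden.
have cop : coprime p `|numq x|.
  by have := coprime_num_den x; rewrite hden /= coprime_pexpr // coprime_sym.
have num_neq0 : numq x != 0.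
  apply: contraTneq e_gt0 => /eqP; rewrite numq_eq0 => /eqP x0.
  have /eqP : (p ^ e)%N%:Z = 1 by rewrite -hden x0.
  by rewrite eqz_nat -(expn0 p) eqn_exp2l ?prime_gt1 // eqn0Ngt.
have -> : (p ^ m)%:R * x = (numq x)%:~R * p%:R ^ (m%:Z - e%:Z).
  rewrite -[x in LHS]divq_num_den hden expfzDr ?pnatr_eq0 -?lt0n ?prime_gt0 //.
  by rewrite -invr_expz -pmulrn !natrX mulrCA.
by rewrite padic_abs_unit_pexpz // opprB.
Qed.

Lemma pball_unit_itv x E : 0 <= x -> x < 1 -> pball p E x ->
  x = 0 \/ exists2 e, (0 < e)%N & denq x = (p ^ e)%N%:Z.
Proof.
move=> x_ge0 x_lt1 /pball_den_pexp[e hden].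
have [e0|e_gt0] := posnP e; last by right; exists e.
left; move: x_ge0 x_lt1; rewrite -[x](divq_num_den x) hden e0 expn0 divr1.
by rewrite ler0z ltrz1 => n_ge0 n_lt1; have -> : numq x = 0 by lia.
Qed.

End PBall.

Lemma exprz_lt_ceil_log (R : realType) (a lam : R) (k : int) :
  1 < a -> 0 < lam -> (a ^ k < lam) = (k < Num.ceil (ln lam / ln a)).
Proof.
move=> a_gt1 lam_gt0; have a_gt0 : 0 < a by apply: lt_trans a_gt1.
rewrite -powR_intmul ?ltW // -(ltr_ln (powR_gt0 _ a_gt0) lam_gt0) ln_powR.
by rewrite ceil_gt_int ltr_pdivlMr // ln_gt0.
Qed.

Lemma padic_scaled_lt_pball (R : realType) p m J E (lam : R) x :
  prime p -> 0 < lam -> J%:Z = m%:Z + Num.ceil (ln lam / ln p%:R) ->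
  0 <= x -> x < 1 -> pball p E x ->
  padic_abs R p ((p ^ m)%:R * x) / p%:R < lam <-> pball p J x.
Proof.
move=> p_prime lam_gt0 hJ x_ge0 x_lt1 hE.
have [->|[e e_gt0 hden]] := pball_unit_itv p_prime x_ge0 x_lt1 hE.
  by rewrite mulr0 /padic_abs eqxx mul0r lam_gt0; split=> // _; apply: pball0.
have p_gt1 : (1 : R) < p%:R by rewrite ltr1n prime_gt1.
rewrite (padic_abs_pexp_mul p_prime R m e_gt0 hden) -[X in _ / X]expr1z.
rewrite invr_expz -expfzDr ?gt_eqF ?(lt_trans ltr01) //.
rewrite exprz_lt_ceil_log // (pball_pexp_den _ _ hden) // -lez_nat hJ.
by set c := Num.ceil _; split=> h; lia.
Qed.

(* [Defs.fracq] is qualified because rat.v exports an unrelated [fracq]. *)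
Lemma fracq_ge0 q : 0 <= Defs.fracq q.
Proof. by rewrite subr_ge0 floor_le. Qed.

Lemma fracq_lt1 q : Defs.fracq q < 1.
Proof. by rewrite ltrBlDr -[1 + _]addrC -[1]/(1%:~R) -intrD floorD1_gt. Qed.

Lemma fracqDr a b : Defs.fracq (a + Defs.fracq b) = Defs.fracq (a + b).
Proof.
rewrite /Defs.fracq addrA floorDrz ?rpredN ?intr_int //.
by rewrite -rmorphN /= intrKfloor rmorphD /= rmorphN /=; ring.
Qed.

Lemma pball_fracq p j q : prime p -> pball p j (Defs.fracq q) <-> pball p j q.
Proof.
move=> p_prime; split=> h; last exact: pballB h (pball_int _ _ _).
by rewrite -[q](subrK (Num.floor q)%:~R); apply: pballD h (pball_int _ _ _).
Qed.

Lemma big_Gpadd (F : nat -> rat) n :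
  \big[Gpadd/0]_(i < n) F i = Defs.fracq (\sum_(i < n) F i).
Proof.
elim: n F => [|n IH] F; first by rewrite !big_ord0 /Defs.fracq floor0 subr0.
by rewrite !big_ord_recl /= (IH (fun k => F k.+1)) /Gpadd fracqDr.
Qed.

Lemma walkE (T : Type) p (X : nat -> T -> Gp p) n w :
  walk X n w = Defs.fracq (\sum_(i < n) val (X i w)).
Proof. exact: (big_Gpadd (fun i => val (X i w))). Qed.

Section Walk.
Variables (T : Type) (p : nat) (X : nat -> T -> Gp p) (w : T).
Hypothesis p_prime : prime p.

Lemma walk_ge0 n : 0 <= walk X n w.
Proof. by rewrite walkE fracq_ge0. Qed.

Lemma walk_lt1 n : walk X n w < 1.
Proof. by rewrite walkE fracq_lt1. Qed.

Lemma walk_pball_ex n : exists E, pball p E (walk X n w).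
Proof.
have [E hE] : exists E, pball p E (\sum_(i < n) val (X i w)).
  apply: (@pball_sum_ex p p_prime n (fun i => val (X i w))) => i.
  by eexists; apply: (pball_Gp p_prime (valP (X i w))).
by exists E; rewrite walkE pball_fracq.
Qed.

Lemma pball_walk J N :
  (forall n, (n <= N)%N -> pball p J (walk X n w)) <->
  (forall i, (i < N)%N -> pball p J (val (X i w))).
Proof.
rewrite -(pball_sum_ord p_prime N J (fun i => val (X i w))).
by split=> h n /h; rewrite walkE pball_fracq.
Qed.

End Walk.

Lemma image_truncn_itv (R : realType) (K T : R) : 0 <= T ->
  [set Num.truncn (K * s) | s in `[0, T]] = `I_(Num.truncn (K * T)).+1.
Proof.
move=> T_ge0; apply/seteqP.
split=> [_ [s /= /[!in_itv] /= /andP[s_ge0 sT] <-]|n /= nN].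
  have [K_ge0|K_lt0] := leP 0 K; first by apply: le_truncn; rewrite ler_wpM2l.
  suff /truncn0Pn -> : ~~ (1 <= K * s) by [].
  by rewrite -ltNge (le_lt_trans _ ltr01) // mulr_le0_ge0 // ltW.
have [->|n_gt0] := posnP n.
  by exists 0; rewrite ?mulr0 ?truncn0 //= in_itv /= lexx.
have KT_ge1 : 1 <= K * T by rewrite -truncn_gt0 (leq_trans n_gt0).
have K_gt0 : 0 < K.
  rewrite ltNge; apply/negP => K_le0.
  by have := le_trans KT_ge1 (mulr_le0_ge0 K_le0 T_ge0); rewrite ler10.
have nKT : n%:R <= K * T by rewrite -truncn_ge_nat // (le_trans ler01 KT_ge1).
exists (n%:R / K).
  by rewrite /= in_itv /= divr_ge0 ?ler0n ?(ltW K_gt0) //= ler_pdivrMr // mulrC.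
by rewrite mulrC divfK ?gt_eqF //; apply: truncn_def; rewrite lexx ltr_nat /=.
Qed.

Lemma sup_image_lt (R : realType) (f : nat -> R) N (lam : R) :
  sup (f @` `I_N.+1) < lam <-> (forall n, (n <= N)%N -> f n < lam).
Proof.
have [k kN kmax] : exists2 k, (k <= N)%N & forall n, (n <= N)%N -> f n <= f k.
  elim: N => [|N [k kN kmax]].
    by exists 0%N => // n; rewrite leqn0 => /eqP ->.
  have [fk_le|fN_lt] := leP (f k) (f N.+1).
    exists N.+1 => // n; rewrite leq_eqVlt => /orP[/eqP -> //|/kmax].
    by move/le_trans; apply.
  exists k => [|n]; first exact: leqW.
  by rewrite leq_eqVlt => /orP[/eqP ->|/kmax //]; apply: ltW.
have ub : ubound (f @` `I_N.+1) (f k) by move=> _ [n nN <-]; apply: kmax.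
split=> [sup_lt n nN|f_lt].
  by apply: le_lt_trans sup_lt; apply: ub_le_sup; [exists (f k) | exists n].
by apply: le_lt_trans (f_lt k kN); apply: ge_sup ub; exists (f k), k.
Qed.

Lemma sup_walk_lt_pball (R : realType) (T : Type) p (X : nat -> T -> Gp p)
    m J (K t lam : R) w :
  prime p -> 0 <= t -> 0 < lam -> J%:Z = m%:Z + Num.ceil (ln lam / ln p%:R) ->
  sup [set padic_abs R p ((p ^ m)%:R * walk X (Num.truncn (K * s)) w) / p%:R
      | s in `[0, t]] < lam <->
  (forall i, (i < Num.truncn (K * t))%N -> pball p J (val (X i w))).
Proof.
move=> p_prime t_ge0 lam_gt0 hJ.
set f := fun n => padic_abs R p ((p ^ m)%:R * walk X n w) / p%:R.
have f_lt n : f n < lam <-> pball p J (walk X n w).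
  have [E hE] := walk_pball_ex X w p_prime n.
  exact: padic_scaled_lt_pball p_prime lam_gt0 hJ
    (walk_ge0 X w n) (walk_lt1 X w n) hE.
rewrite (_ : [set _ | s in _] = f @` `I_(Num.truncn (K * t)).+1); last first.
  by rewrite -(image_truncn_itv K t_ge0) image_comp.
rewrite sup_image_lt -(pball_walk X w p_prime).
by split=> h n /h /f_lt.
Qed.

Lemma Gp_pball_abs (R : realType) p (x : Gp p) : prime p ->
  val x = 0 \/ exists e, (forall j, pball p j (val x) <-> (e <= j)%N) /\
                         padic_abs R p (val x) = p%:R ^+ e.
Proof.
move=> p_prime; have /and3P[x_ge0 x_lt1 _] := valP x.
have [|[e e_gt0 hden]] := pball_unit_itv p_prime x_ge0 x_lt1
  (pball_Gp p_prime (valP x)); first by left.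
right; exists e; split=> [j|]; first exact: pball_pexp_den.
by have := padic_abs_pexp_mul p_prime R 0 e_gt0 hden; rewrite expn0 mul1r subr0.
Qed.

Lemma pnatr_expI (R : numDomainType) p : (1 < p)%N ->
  injective (fun e => (p%:R : R) ^+ e).
Proof.
move=> p_gt1 e k /=; rewrite -!natrX => /eqP.
by rewrite eqr_nat => /eqP /expnI->.
Qed.

Lemma Gp_pball_succ (R : realType) p (x : Gp p) j : prime p ->
  pball p j.+1 (val x) <->
  pball p j (val x) \/ padic_abs R p (val x) = p%:R ^+ j.+1.
Proof.
move=> p_prime; have [x0|[e [he ->]]] := Gp_pball_abs R x p_prime.
  by rewrite x0; split=> _; [left|]; apply: pball0.
rewrite !he; split=> [|[/leqW //|/(pnatr_expI (prime_gt1 p_prime)) ->//]].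
by rewrite leq_eqVlt ltnS => /orP[/eqP ->|]; [right | left].
Qed.

Lemma Gp_pball_sphere_disj (R : realType) p (x : Gp p) j : prime p ->
  ~ (pball p j (val x) /\ padic_abs R p (val x) = p%:R ^+ j.+1).
Proof.
move=> p_prime [].
have [x0 _|[e [-> ->]] ej] := Gp_pball_abs R x p_prime.
  rewrite x0 /padic_abs eqxx => /eqP; rewrite eq_sym expf_eq0 pnatr_eq0.
  by rewrite (gtn_eqF (prime_gt0 p_prime)) andbF.
by move/(pnatr_expI (prime_gt1 p_prime)); lia.
Qed.

Lemma le_exprn_eq0 (R : realType) (r q : R) : 0 <= q -> q < 1 -> 0 <= r ->
  (forall n, r <= q ^+ n) -> r = 0.
Proof.
move=> q_ge0 q_lt1 r_ge0 r_le; apply/eqP; rewrite eq_le r_ge0 andbT leNgt.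
apply/negP => r_gt0.
have q_norm : `|q| < 1 by rewrite ger0_norm.
have [N _ HN] := cvgr0_norm_lt (fun n => q ^+ n) (cvg_expr q_norm) r r_gt0.
by have /= := HN N (leqnn N); rewrite ger0_norm ?exprn_ge0 // ltNge r_le.
Qed.

Section StepLaw.
Variables (d : measure_display) (T : measurableType d) (R : realType).
Variables (P : probability T R) (p : nat) (b : R) (Y : T -> Gp p).
Hypotheses (p_prime : prime p) (b_gt0 : 0 < b).
Hypotheses (Y_meas : forall A, measurable (Y @^-1` A)) (Y_law : step_law P b Y).

Let q := (p%:R : R) `^ (- b).
Let ball j := Y @^-1` [set x : Gp p | pball p j (val x)].
Let sphere k := Y @^-1` [set x : Gp p | padic_abs R p (val x) = p%:R ^+ k].

Let p_gt0 : (0 : R) < p%:R.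
Proof. by rewrite ltr0n prime_gt0. Qed.

Let q_ge0 : 0 <= q.
Proof. exact/ltW/powR_gt0. Qed.

Let q_lt1 : q < 1.
Proof.
rewrite -(ltr_ln (powR_gt0 _ p_gt0) ltr01) ln_powR ln1 mulNr oppr_lt0.
by rewrite mulr_gt0 // ln_gt0 // ltr1n prime_gt1.
Qed.

Lemma prob_sphere k : (0 < k)%N -> P (sphere k) = (q ^+ k.-1 - q ^+ k)%:E.
Proof.
case: k => // k _; rewrite /sphere Y_law.1 //; congr (_%:E).
have -> : (p%:R : R) `^ (- (k.+1%:R * b)) = q ^+ k.+1.
  by rewrite -mulrN mulrC powRrM powR_mulrn ?powR_ge0.
have pbq : (p%:R : R) `^ b * q = 1 by rewrite /q powRN mulfV ?gt_eqF ?powR_gt0.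
by rewrite exprS mulrBl mul1r mulrA pbq mul1r.
Qed.

Lemma prob_pball_succ j :
  P (ball j.+1) = (P (ball j) + (q ^+ j - q ^+ j.+1)%:E)%E.
Proof.
have -> : ball j.+1 = ball j `|` sphere j.+1.
  rewrite /ball /sphere; apply/seteqP.
  by split=> w /= /(Gp_pball_succ R (Y w) j p_prime).
rewrite measureU; try exact: Y_meas.
  by congr (_ + _)%E; apply: prob_sphere.
rewrite /ball /sphere; apply/seteqP; split=> // w.
exact: Gp_pball_sphere_disj p_prime.
Qed.

Lemma prob_pball0 : P (ball 0) = 0.
Proof.
have ball_rec j : P (ball j) = (P (ball 0) + (1 - q ^+ j)%:E)%E.
  elim: j => [|j IH]; first by rewrite expr0 subrr adde0.
  rewrite prob_pball_succ IH -addeA; congr (_ + _)%E.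
  by rewrite -EFinD; congr _%:E; ring.
have ball0_fin : P (ball 0) \is a fin_num.
  by apply: fin_num_measure; apply: Y_meas.
rewrite -(fineK ball0_fin); congr _%:E.
apply: (le_exprn_eq0 q_ge0 q_lt1); first exact/fine_ge0/measure_ge0.
move=> n; have : (P (ball n) <= 1)%E by apply: probability_le1; apply: Y_meas.
by rewrite ball_rec -(fineK ball0_fin) -EFinD lee_fin; lra.
Qed.

Lemma prob_pball j : P (Y @^-1` [set x | pball p j (val x)]) = (1 - q ^+ j)%:E.
Proof.
rewrite -/(ball j); elim: j => [|j IH].
  by rewrite prob_pball0 expr0 subrr.
by rewrite prob_pball_succ IH -EFinD; congr (_%:E); ring.
Qed.

End StepLaw.

Lemma pfloor_ceil_log (R : realType) p (lam : R) : (0 < p)%N ->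
  p%:R * pfloor p lam = p%:R ^ Num.ceil (ln lam / ln p%:R).
Proof.
move=> p_gt0; rewrite /pfloor -{1}(expr1z (p%:R : R)).
by rewrite -expfzDr ?pnatr_eq0 -?lt0n // addrC subrK.
Qed.

Lemma powRN_pexp_ceil_log (R : realType) p (b lam : R) m J : prime p ->
  J%:Z = m%:Z + Num.ceil (ln lam / ln p%:R) ->
  ((p%:R : R) `^ (- b)) ^+ J =
  (p%:R * pfloor p lam) `^ (- b) / p%:R `^ (m%:R * b).
Proof.
move=> p_prime hJ; have p_gt0 : (0 : R) < p%:R by rewrite ltr0n prime_gt0.
have JR : (J%:R : R) = m%:R + (Num.ceil (ln lam / ln p%:R))%:~R.
  by rewrite -[J%:R]/(J%:Z%:~R) hJ rmorphD.
rewrite pfloor_ceil_log ?prime_gt0 // -powR_intmul ?ltW // -powRrM.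
rewrite -powR_mulrn ?powR_ge0 // -powRrM -powRN.
rewrite -powRD ?(gt_eqF p_gt0) ?implybT //.
by congr (_ `^ _); rewrite JR; ring.
Qed.

Theorem lemma1 (d : measure_display) (Omega : measurableType d) (R : realType)
  (P : probability Omega R) (p : nat) (b sigma : R) (X : nat -> Omega -> Gp p)
  (m : nat) (T lam : R) :
  prime p -> 0 < b -> 0 <= sigma -> iid_steps P b X ->
  0 <= T -> 0 < lam ->
  (1 <= m%:Z + Num.ceil (ln lam / ln p%:R))%R ->
  P [set w | sup [set padic_abs R p ((p ^ m)%:R * walk X
                     (Num.truncn (Dcoef p b sigma * p%:R `^ (m%:R * b) * s)) w)
                   / p%:R | s in `[0, T]] < lam] =
  ((1 - (p%:R * pfloor p lam) `^ (- b) / p%:R `^ (m%:R * b))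
     ^+ Num.truncn (Dcoef p b sigma * p%:R `^ (m%:R * b) * T))%:E.
Proof.
move=> p_prime b_gt0 _ [X_meas [X_indep X_law]] T_ge0 lam_gt0 hJ.
set K := Dcoef p b sigma * p%:R `^ (m%:R * b); set N := Num.truncn (K * T).
set J := `|(m%:Z + Num.ceil (ln lam / ln p%:R))%R|%N.
have JE : J%:Z = m%:Z + Num.ceil (ln lam / ln p%:R).
  by rewrite gez0_abs // (le_trans _ hJ).
rewrite (_ : [set w | _] =
             \bigcap_(i in `I_N) X i @^-1` [set x | pball p J (val x)]).
  rewrite X_indep (eq_bigr (fun=> (1 - ((p%:R : R) `^ (- b)) ^+ J)%:E)).
    by rewrite prodEFin prodr_const card_ord (powRN_pexp_ceil_log b p_prime JE).
  by move=> i _; apply: prob_pball.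
apply/seteqP; split=> w /=.
  by move/(sup_walk_lt_pball X K w p_prime T_ge0 lam_gt0 JE) => h i /h.
by move=> h; apply/(sup_walk_lt_pball X K w p_prime T_ge0 lam_gt0 JE) => i /h.
Qed.
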